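(* Let $F:\mathbb C^n\to\mathbb C^n$ be a square system of polynomials, and let $I\in\mathbb{IC}^n$ be a strong interval approximate zero of $F$, witnessed by a point $\tilde x\in I$ and an invertible matrix $Y\in\mathbb C^{n\times n}$ (so that $K_{\tilde x,Y}(I)\subset I$ and $\sqrt2\,\lVert \mathbf 1_n - Y\cdot\square\mathrm JF(I)\rVert_\infty<1$). Let $x^*\in I$ be the unique zero of $F$ in $I$. Let $x\in I$ be any point, set $x_0:=x$ and $x_i:=x_{i-1}-Y\,F(x_{i-1})$ for $i\ge 1$. Then the sequence $(x_i)_{i\ge0}$ converges (at least linearly) to $x^*$.
   Context: $\mathbb{IR}$ is the set of compact real intervals $[a,b]$, with operations $X\circ Y=\{x\circ y: x\in X,y\in Y\}$ for $\circ\in\{+,-,\cdot,/\}$ ($0\notin Y$ for division). $\mathbb{IC}=\{X+iY: X,Y\in\mathbb{IR}\}$ is the set of rectangular complex intervals, where $X+iY=\{x+iy:x\in X,y\in Y\}$, with operations defined for $I=X+iY$, $J=W+iZ$ by $I\pm J=(X\pm W)+i(Y\pm Z)$, $I\cdot J=(X W-YZ)+i(XZ+YW)$, $I/J=\frac{XW+YZ}{WW+ZZ}+i\frac{YW-XZ}{WW+ZZ}$. Operations on $\mathbb{IC}^n$ are componentwise; for an interval matrix $A=(A_{i,j})\in\mathbb{IC}^{n\times n}$ and $I\in\mathbb{IC}^n$, $A\cdot I:=\sum_{j=1}^n I_j\cdot(A_{1,j},\dots,A_{n,j})^T$. A point $x\in\mathbb C^n$ is identified with the degenerate interval vector $[\mathrm{Re}\,x,\mathrm{Re}\,x]+i[\mathrm{Im}\,x,\mathrm{Im}\,x]$.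 An interval enclosure of a map $F:\mathbb C^n\to\mathbb C^m$ is a map $\square F:\mathbb{IC}^n\to\mathbb{IC}^m$ with $\{F(x):x\in I\}\subseteq\square F(I)$ for all $I$; $\square F$ and $\square\mathrm JF$ denote fixed interval enclosures of $F$ and of its Jacobian $\mathrm JF:\mathbb C^n\to\mathbb C^{n\times n}$. For $A\in\mathbb{IC}^{n\times n}$, $\lVert A\rVert_\infty:=\max_{B\in A}\max_{v\in\mathbb C^n\setminus\{0\}}\lVert Bv\rVert_\infty/\lVert v\rVert_\infty$ with $\lVert v\rVert_\infty=\max_i|v_i|$. For $I\in\mathbb{IC}^n$, $x\in\mathbb C^n$ and invertible $Y\in\mathbb C^{n\times n}$, the Krawczyk operator is $K_{x,Y}(I):=x-Y\cdot\square F(x)+(\mathbf 1_n-Y\cdot\square\mathrm JF(I))(I-x)$, where $\mathbf 1_n$ is the identity matrix. $I$ is a strong interval approximate zero of $F$ if there exist $x\in I$ and an invertible $Y\in\mathbb C^{n\times n}$ with $K_{x,Y}(I)\subset I$ and $\sqrt2\,\lVert\mathbf 1_n-Y\cdot\square\mathrm JF(I)\rVert_\infty<1$; such an $I$ contains exactly one zero of $F$. *)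

From HB Require Import structures.
From mathcomp Require Import all_boot all_order all_algebra.
From mathcomp Require Import classical_sets reals.
From mathcomp Require Import complex.
From mathcomp Require Import mpoly.
Import Order.TTheory GRing.Theory Num.Theory.

Set Implicit Arguments.
Unset Strict Implicit.
Unset Printing Implicit Defensive.

Local Open Scope ring_scope.
Local Open Scope classical_set_scope.

Section IntervalArithmetic.
Variable R : realType.

(** Compact real intervals [a,b], represented by their endpoints.
    The operations are the usual endpoint formulas, which coincide with
    X o Y = {x o y : x in X, y in Y} on (nonempty) intervals. *)
Record IR := mkIR { ilo : R; ihi : R }.

Definition inIR (X : IR) (x : R) : bool := (ilo X <= x) && (x <= ihi X).

Definition iradd (X Y : IR) : IR := mkIR (ilo X + ilo Y) (ihi X + ihi Y).
Definition irsub (X Y : IR) : IR := mkIR (ilo X - ihi Y) (ihi X - ilo Y).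
Definition irmul (X Y : IR) : IR :=
  let p1 := ilo X * ilo Y in let p2 := ilo X * ihi Y in
  let p3 := ihi X * ilo Y in let p4 := ihi X * ihi Y in
  mkIR (Num.min (Num.min p1 p2) (Num.min p3 p4))
       (Num.max (Num.max p1 p2) (Num.max p3 p4)).

Record IC := mkIC { icre : IR; icim : IR }.

Definition inIC (I : IC) (z : R[i]) : bool :=
  inIR (icre I) (complex.Re z) && inIR (icim I) (complex.Im z).

Definition icadd (I J : IC) : IC :=
  mkIC (iradd (icre I) (icre J)) (iradd (icim I) (icim J)).
Definition icsub (I J : IC) : IC :=
  mkIC (irsub (icre I) (icre J)) (irsub (icim I) (icim J)).
(* (X+iY)(W+iZ) = (XW - YZ) + i(XZ + YW) *)
Definition icmul (I J : IC) : IC :=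
  mkIC (irsub (irmul (icre I) (icre J)) (irmul (icim I) (icim J)))
       (iradd (irmul (icre I) (icim J)) (irmul (icim I) (icre J))).

Definition iczero : IC := mkIC (mkIR 0 0) (mkIR 0 0).

Definition icpt (z : R[i]) : IC :=
  mkIC (mkIR (complex.Re z) (complex.Re z)) (mkIR (complex.Im z) (complex.Im z)).

Variable n : nat.

Definition ICvec := 'I_n -> IC.
Definition ICmat := 'I_n -> 'I_n -> IC.

Definition inICv (I : ICvec) (x : 'cV[R[i]]_n) : Prop := forall i, inIC (I i) (x i ord0).
Definition inICm (A : ICmat) (B : 'M[R[i]]_n) : Prop := forall i j, inIC (A i j) (B i j).

Definition icv_subset (I J : ICvec) : Prop := forall x, inICv I x -> inICv J x.

Definition ptvec (x : 'cV[R[i]]_n) : ICvec := fun i => icpt (x i ord0).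
Definition ptmx (Y : 'M[R[i]]_n) : ICmat := fun i j => icpt (Y i j).

Definition icsum (f : 'I_n -> IC) : IC :=
  foldl (fun acc j => icadd acc (f j)) iczero (enum 'I_n).

Definition icvadd (I J : ICvec) : ICvec := fun i => icadd (I i) (J i).
Definition icvsub (I J : ICvec) : ICvec := fun i => icsub (I i) (J i).
Definition icmsub (A B : ICmat) : ICmat := fun i j => icsub (A i j) (B i j).

Definition icmv (A : ICmat) (I : ICvec) : ICvec :=
  fun i => icsum (fun j => icmul (I j) (A i j)).
Definition icmm (A B : ICmat) : ICmat :=
  fun i k => icsum (fun j => icmul (A i j) (B j k)).

Definition cabs (z : R[i]) : R :=
  Num.sqrt (complex.Re z ^+ 2 + complex.Im z ^+ 2).

Definition vnorm (v : 'cV[R[i]]_n) : R := \big[Num.max/0]_(i < n) cabs (v i ord0).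

Definition opnorm (B : 'M[R[i]]_n) : R :=
  sup [set r | exists v : 'cV[R[i]]_n, v != 0 /\ r = vnorm (B *m v) / vnorm v].

Definition imnorm (A : ICmat) : R :=
  sup [set r | exists B, inICm A B /\ r = opnorm B].

Definition evalF (F : 'I_n -> {mpoly R[i][n]}) (x : 'cV[R[i]]_n) : 'cV[R[i]]_n :=
  \col_i (F i).@[fun j => x j ord0].

Definition jacF (F : 'I_n -> {mpoly R[i][n]}) (x : 'cV[R[i]]_n) : 'M[R[i]]_n :=
  \matrix_(i, j) ((F i)^`M(j)).@[fun k => x k ord0].

Definition is_enclosure_F (F : 'I_n -> {mpoly R[i][n]}) (boxF : ICvec -> ICvec) : Prop :=
  forall I x, inICv I x -> inICv (boxF I) (evalF F x).

Definition is_enclosure_JF (F : 'I_n -> {mpoly R[i][n]}) (boxJF : ICvec -> ICmat) : Prop :=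
  forall I x, inICv I x -> inICm (boxJF I) (jacF F x).

Definition krawczyk (boxF : ICvec -> ICvec) (boxJF : ICvec -> ICmat)
    (x : 'cV[R[i]]_n) (Y : 'M[R[i]]_n) (I : ICvec) : ICvec :=
  icvadd (icvsub (ptvec x) (icmv (ptmx Y) (boxF (ptvec x))))
         (icmv (icmsub (ptmx 1%:M) (icmm (ptmx Y) (boxJF I))) (icvsub I (ptvec x))).

Definition strong_iaz_witness (boxF : ICvec -> ICvec) (boxJF : ICvec -> ICmat)
    (I : ICvec) (xt : 'cV[R[i]]_n) (Y : 'M[R[i]]_n) : Prop :=
  [/\ inICv I xt, Y \in unitmx,
      icv_subset (krawczyk boxF boxJF xt Y I) I &
      Num.sqrt 2 * imnorm (icmsub (ptmx 1%:M) (icmm (ptmx Y) (boxJF I))) < 1].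

Definition newton_const_iter (F : 'I_n -> {mpoly R[i][n]}) (Y : 'M[R[i]]_n)
    (x : 'cV[R[i]]_n) (i : nat) : 'cV[R[i]]_n :=
  iter i (fun z => z - Y *m evalF F z) x.

Definition converges_to (u : nat -> 'cV[R[i]]_n) (l : 'cV[R[i]]_n) : Prop :=
  forall eps : R, 0 < eps -> exists N : nat, forall i, (N <= i)%N -> vnorm (u i - l) < eps.

Definition converges_linearly (u : nat -> 'cV[R[i]]_n) (l : 'cV[R[i]]_n) : Prop :=
  exists c : R, 0 <= c /\ c < 1 /\
    forall i, vnorm (u i.+1 - l) <= c * vnorm (u i - l).

End IntervalArithmetic.

From HB Require Import structures.
From mathcomp Require Import all_boot all_order all_algebra.
From mathcomp Require Import boolp classical_sets reals.
From mathcomp Require Import complex polyrcf.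
From mathcomp Require Import mpoly.
From mathcomp Require Import lra ring.
Import Order.TTheory GRing.Theory Num.Theory.
Set Implicit Arguments.
Unset Strict Implicit.
Unset Printing Implicit Defensive.
Local Open Scope ring_scope.
Local Open Scope complex_scope.

(* For x, y in the box I, F(x) - F(y) = M (x - y) where M i j is the average
   of d_j F_i over the segment [y, x]. By the mean value theorem, the real part
   of M i j is the real part of a value of d_j F_i at some point of the segment,
   and likewise for the imaginary part; as boxes are convex, M lies in []JF(I).
   Taking the segment [xt, x_k] gives
   x_(k+1) = xt - Y F(xt) + (1 - Y M)(x_k - xt), a point of K(I), which is
   contained in I; so the iterates stay in I. Taking [xstar, x_k] gives
   x_(k+1) - xstar = (1 - Y M)(x_k - xstar), a contraction of ratio at most
   ||1 - Y []JF(I)|| < 1/sqrt 2. *)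

Lemma mulr_between (R : realDomainType) (a b u y : R) : a <= u <= b ->
  Num.min (a * y) (b * y) <= u * y <= Num.max (a * y) (b * y).
Proof.
case/andP=> au ub; rewrite ge_min le_max; have [y_ge0|y_lt0] := lerP 0 y.
  by rewrite (ler_wpM2r y_ge0 au) (ler_wpM2r y_ge0 ub) orbT.
by rewrite (ler_wnM2r (ltW y_lt0) au) (ler_wnM2r (ltW y_lt0) ub) orbT.
Qed.

Section IntervalInclusion.
Variable R : realType.
Implicit Types (X Y : IR R) (a b : R) (J K : IC R) (z w : R[i]).

Lemma inIRD X Y a b : inIR X a -> inIR Y b -> inIR (iradd X Y) (a + b).
Proof. by case/andP=> ? ? /andP[? ?]; apply/andP; split; rewrite /= lerD. Qed.

Lemma inIRB X Y a b : inIR X a -> inIR Y b -> inIR (irsub X Y) (a - b).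
Proof. by case/andP=> ? ? /andP[? ?]; apply/andP; split; rewrite /= lerB. Qed.

Lemma inIRM X Y a b : inIR X a -> inIR Y b -> inIR (irmul X Y) (a * b).
Proof.
move=> hX hY; rewrite /inIR /=.
have /andP[ab_min ab_max] := mulr_between b hX.
have /andP[lob_min lob_max] : Num.min (ilo X * ilo Y) (ilo X * ihi Y) <=
    ilo X * b <= Num.max (ilo X * ilo Y) (ilo X * ihi Y).
  by rewrite ![ilo X * _]mulrC; apply: mulr_between.
have /andP[hib_min hib_max] : Num.min (ihi X * ilo Y) (ihi X * ihi Y) <=
    ihi X * b <= Num.max (ihi X * ilo Y) (ihi X * ihi Y).
  by rewrite ![ihi X * _]mulrC; apply: mulr_between.
apply/andP; split.
  apply: le_trans ab_min; rewrite le_min; apply/andP; split.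
    by apply: le_trans lob_min; rewrite ge_min lexx.
  by apply: le_trans hib_min; rewrite ge_min lexx orbT.
apply: le_trans ab_max _; rewrite ge_max; apply/andP; split.
  by apply: le_trans lob_max _; rewrite le_max lexx.
by apply: le_trans hib_max _; rewrite le_max lexx orbT.
Qed.

Lemma inICD J K z w : inIC J z -> inIC K w -> inIC (icadd J K) (z + w).
Proof.
by case: z w => [? ?] [? ?] /andP[? ?] /andP[? ?]; apply/andP; split; apply: inIRD.
Qed.

Lemma inICB J K z w : inIC J z -> inIC K w -> inIC (icsub J K) (z - w).
Proof.
by case: z w => [? ?] [? ?] /andP[? ?] /andP[? ?]; apply/andP; split; apply: inIRB.
Qed.

Lemma inICM J K z w : inIC J z -> inIC K w -> inIC (icmul J K) (z * w).
Proof.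
case: z w => [? ?] [? ?] /andP[? ?] /andP[? ?]; apply/andP; split.
  by apply: inIRB; apply: inIRM.
by apply: inIRD; apply: inIRM.
Qed.

Lemma inIC0 : inIC (@iczero R) 0.
Proof. by rewrite /inIC /inIR /= lexx. Qed.

Lemma inIC_pt z : inIC (icpt z) z.
Proof. by rewrite /inIC /inIR /= !lexx. Qed.

Variable n : nat.

Lemma inIC_sum (f : 'I_n -> IC R) (g : 'I_n -> R[i]) :
  (forall j, inIC (f j) (g j)) -> inIC (icsum f) (\sum_j g j).
Proof.
move=> fg; rewrite /icsum -big_enum /=.
have foldl_in (s : seq 'I_n) acc (a : R[i]) : inIC acc a ->
    inIC (foldl (fun acc j => icadd acc (f j)) acc s) (a + \sum_(j <- s) g j).
  elim: s acc a => [|j s IHs] acc a acc_a; first by rewrite big_nil addr0.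
  by rewrite big_cons addrA; apply: IHs; apply: inICD.
by rewrite -[X in inIC _ X]add0r; apply: foldl_in; apply: inIC0.
Qed.

Implicit Types (I : ICvec R n) (A B : ICmat R n).
Implicit Types (x y : 'cV[R[i]]_n) (M N : 'M[R[i]]_n).

Lemma inICv_pt x : inICv (ptvec x) x.
Proof. by move=> i; apply: inIC_pt. Qed.

Lemma inICm_pt M : inICm (ptmx M) M.
Proof. by move=> i j; apply: inIC_pt. Qed.

Lemma inICvD I1 I2 x y : inICv I1 x -> inICv I2 y -> inICv (icvadd I1 I2) (x + y).
Proof. by move=> hx hy i; rewrite mxE; apply: inICD. Qed.

Lemma inICvB I1 I2 x y : inICv I1 x -> inICv I2 y -> inICv (icvsub I1 I2) (x - y).
Proof. by move=> hx hy i; rewrite !mxE; apply: inICB. Qed.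

Lemma inICmB A B M N : inICm A M -> inICm B N -> inICm (icmsub A B) (M - N).
Proof. by move=> hM hN i j; rewrite !mxE; apply: inICB. Qed.

Lemma inICv_mulmx A M I x : inICm A M -> inICv I x -> inICv (icmv A I) (M *m x).
Proof.
by move=> hM hx i; rewrite mxE; apply: inIC_sum => j; rewrite mulrC; apply: inICM.
Qed.

Lemma inICm_mulmx A B M N : inICm A M -> inICm B N -> inICm (icmm A B) (M *m N).
Proof. by move=> hM hN i k; rewrite mxE; apply: inIC_sum => j; apply: inICM. Qed.

End IntervalInclusion.

Section ComplexNorm.
Variable R : realType.
Implicit Types (z w : R[i]).

Lemma cabsE z : (cabs z)%:C = `|z|.
Proof. by rewrite normc_def. Qed.

Lemma cabs_ge0 z : 0 <= cabs z.
Proof. exact: sqrtr_ge0. Qed.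

Lemma cabs0 : cabs (0 : R[i]) = 0.
Proof. by apply: complexI; rewrite cabsE normr0. Qed.

Lemma cabs_eq0 z : cabs z = 0 -> z = 0.
Proof. by move=> z0; apply/eqP; rewrite -normr_eq0 -cabsE z0. Qed.

Lemma ler_cabsD z w : cabs (z + w) <= cabs z + cabs w.
Proof. by rewrite -lecR rmorphD /= !cabsE ler_normD. Qed.

Lemma cabsM z w : cabs (z * w) = cabs z * cabs w.
Proof. by apply: complexI; rewrite rmorphM /= !cabsE normrM. Qed.

Lemma ler_cabs_sum (T : Type) (r : seq T) (g : T -> R[i]) :
  cabs (\sum_(j <- r) g j) <= \sum_(j <- r) cabs (g j).
Proof.
elim: r => [|j r IHr]; first by rewrite !big_nil cabs0.
by rewrite !big_cons; apply: le_trans (ler_cabsD _ _) _; rewrite lerD2l.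
Qed.

Lemma cabs_le_normReIm z : cabs z <= `|complex.Re z| + `|complex.Im z|.
Proof.
set a := complex.Re z; set b := complex.Im z.
have sq_le : a ^+ 2 + b ^+ 2 <= (`|a| + `|b|) ^+ 2.
  rewrite -(real_normK (num_real a)) -(real_normK (num_real b)) sqrrD lerD2r.
  by rewrite lerDl mulrn_wge0 // mulr_ge0.
apply: le_trans (ler_wsqrtr sq_le) _.
by rewrite sqrtr_sqr ger0_norm // addr_ge0.
Qed.

Definition ir_bound (X : IR R) : R := `|ilo X| + `|ihi X|.
Definition ic_bound (J : IC R) : R := ir_bound (icre J) + ir_bound (icim J).

Lemma inIR_norm_le X a : inIR X a -> `|a| <= ir_bound X.
Proof.
case/andP=> lo_a a_hi; rewrite ler_norml.
have := ler_norm (ihi X); have := ler_norm (- ilo X); rewrite normrN.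
have := normr_ge0 (ilo X); have := normr_ge0 (ihi X).
by rewrite /ir_bound; move=> *; apply/andP; split; lra.
Qed.

Lemma inIC_cabs_le J z : inIC J z -> cabs z <= ic_bound J.
Proof.
case/andP=> re_z im_z; apply: le_trans (cabs_le_normReIm z) _.
by apply: lerD; apply: inIR_norm_le.
Qed.

End ComplexNorm.

Section VectorNorm.
Local Open Scope classical_set_scope.
Variables (R : realType) (n : nat).
Implicit Types (v : 'cV[R[i]]_n) (M : 'M[R[i]]_n).

Lemma vnorm_ge0 v : 0 <= vnorm v.
Proof.
rewrite /vnorm; elim/big_ind: _ => //= [a b a_ge0 b_ge0|i _].
  by rewrite le_max a_ge0.
exact: cabs_ge0.
Qed.

Lemma cabs_le_vnorm v i : cabs (v i ord0) <= vnorm v.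
Proof. exact: le_bigmax. Qed.

Lemma vnorm_le v r : 0 <= r -> (forall i, cabs (v i ord0) <= r) -> vnorm v <= r.
Proof. by move=> r_ge0 v_le; apply: bigmax_le. Qed.

Lemma vnorm0 : vnorm (0 : 'cV[R[i]]_n) = 0.
Proof.
apply/eqP; rewrite eq_le vnorm_ge0 andbT.
by apply: vnorm_le => // i; rewrite mxE cabs0.
Qed.

Lemma vnorm_gt0 v : v != 0 -> 0 < vnorm v.
Proof.
apply: contraNT; rewrite lt_def negb_and negbK vnorm_ge0 orbF => /eqP v0.
apply/eqP/matrixP => i j; rewrite (ord1 j) mxE; apply: cabs_eq0.
by apply/eqP; rewrite eq_le cabs_ge0 -v0 cabs_le_vnorm.
Qed.

Definition mx_abs_sum M : R := \sum_i \sum_j cabs (M i j).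

Lemma mx_abs_sum_ge0 M : 0 <= mx_abs_sum M.
Proof. by do 2!apply: sumr_ge0 => ? _; apply: cabs_ge0. Qed.

Lemma vnorm_mulmx_le_abs_sum M v : vnorm (M *m v) <= mx_abs_sum M * vnorm v.
Proof.
apply: vnorm_le => [|i]; first by rewrite mulr_ge0 ?mx_abs_sum_ge0 ?vnorm_ge0.
rewrite mxE; apply: le_trans (ler_cabs_sum _ _) _.
apply: (@le_trans _ _ (\sum_j cabs (M i j) * vnorm v)).
  by apply: ler_sum => j _; rewrite cabsM ler_wpM2l ?cabs_ge0 ?cabs_le_vnorm.
rewrite -mulr_suml ler_wpM2r ?vnorm_ge0 // /mx_abs_sum.
rewrite [X in _ <= X](bigD1 i) //= lerDl.
by do 2!apply: sumr_ge0 => ? _; apply: cabs_ge0.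
Qed.

Local Notation ratios M :=
  [set r | exists v : 'cV[R[i]]_n, v != 0 /\ r = vnorm (M *m v) / vnorm v].

Lemma ratios_ubound M K : (forall v, vnorm (M *m v) <= K * vnorm v) ->
  ubound (ratios M) K.
Proof. by move=> MK r [v [v0 ->]]; rewrite ler_pdivrMr ?vnorm_gt0. Qed.

Lemma opnorm_le M K : 0 <= K -> (forall v, vnorm (M *m v) <= K * vnorm v) ->
  opnorm M <= K.
Proof.
move=> K_ge0 MK; have [[r ratio_r]|no_ratio] := pselect (ratios M !=set0).
  by apply: ge_sup; [exists r | apply: ratios_ubound].
by move/nonemptyPn: no_ratio; rewrite /opnorm => ->; rewrite sup0.
Qed.

Lemma vnorm_mulmx_le_opnorm M v : vnorm (M *m v) <= opnorm M * vnorm v.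
Proof.
have [->|v0] := eqVneq v 0; first by rewrite mulmx0 vnorm0 mulr0.
rewrite -ler_pdivrMr ?vnorm_gt0 //; apply: ub_le_sup; last by exists v.
by exists (mx_abs_sum M); apply: ratios_ubound => w; apply: vnorm_mulmx_le_abs_sum.
Qed.

Lemma opnorm_le_imnorm A M : inICm A M -> opnorm M <= imnorm A.
Proof.
move=> AM; apply: ub_le_sup; last by exists M.
exists (\sum_i \sum_j ic_bound (A i j)) => r [N [AN ->]].
apply: le_trans (opnorm_le (mx_abs_sum_ge0 N) (@vnorm_mulmx_le_abs_sum N)) _.
by apply: ler_sum => i _; apply: ler_sum => j _; apply: inIC_cabs_le.
Qed.

Lemma vnorm_mulmx_le_imnorm A M v :
  inICm A M -> vnorm (M *m v) <= imnorm A * vnorm v.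
Proof.
move=> AM; apply: le_trans (vnorm_mulmx_le_opnorm M v) _.
by rewrite ler_wpM2r ?vnorm_ge0 ?opnorm_le_imnorm.
Qed.

End VectorNorm.

Lemma bernoulli_ineq (R : realDomainType) (h : R) N : 0 <= h ->
  1 + N%:R * h <= (1 + h) ^+ N.
Proof.
move=> h_ge0; elim: N => [|N IHN]; first by rewrite mul0r addr0 expr0.
have Nh_ge0 : 0 <= N%:R * h by rewrite mulr_ge0.
rewrite exprS -natr1 mulrDl mul1r; nra.
Qed.

Lemma exists_exprn_lt (R : archiFieldType) (q e : R) : 0 <= q -> q < 1 -> 0 < e ->
  exists N, q ^+ N < e.
Proof.
move=> q_ge0 q_lt1 e_gt0; have [->|q_neq0] := eqVneq q 0.
  by exists 1%N; rewrite expr1.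
have q_gt0 : 0 < q by rewrite lt_def q_neq0.
pose h := q^-1 - 1.
have h_gt0 : 0 < h by rewrite subr_gt0 invf_gt1.
have [N N_gt] : exists N, (e * h)^-1 < N%:R.
  exists (Num.Def.archi_bound (e * h)^-1).
  by apply: archi_boundP; rewrite invr_ge0 ltW ?mulr_gt0.
exists N; have qE : q ^+ N = ((1 + h) ^+ N)^-1.
  by rewrite addrC subrK -exprVn invrK.
have pow_gt0 : 0 < (1 + h) ^+ N by rewrite exprn_gt0 // addr_gt0.
rewrite qE -[_^-1]mul1r ltr_pdivrMr //.
rewrite -[(e * h)^-1]mul1r ltr_pdivrMr ?mulr_gt0 // in N_gt.
have := bernoulli_ineq N (ltW h_gt0); nra.
Qed.

Section Convergence.
Variables (R : realType) (n : nat).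
Implicit Types (u : nat -> 'cV[R[i]]_n) (l : 'cV[R[i]]_n).

Lemma converges_linearly_contraction u l c : c < 1 ->
  (forall m, vnorm (u m.+1 - l) <= c * vnorm (u m - l)) -> converges_linearly u l.
Proof.
move=> c_lt1 contr; exists (Num.max c 0).
split; first by rewrite le_max lexx orbT.
split; first by rewrite gt_max c_lt1 ltr01.
move=> m; apply: le_trans (contr m) _.
by rewrite ler_wpM2r ?vnorm_ge0 // le_max lexx.
Qed.

Lemma converges_linearly_to u l : converges_linearly u l -> converges_to u l.
Proof.
case=> c [c_ge0 [c_lt1 contr]] e e_gt0.
have geo m : vnorm (u m - l) <= c ^+ m * vnorm (u 0%N - l).
  elim: m => [|m IHm]; first by rewrite expr0 mul1r.
  by rewrite exprS -mulrA; apply: le_trans (contr m) _; rewrite ler_wpM2l.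
have d_gt0 : 0 < vnorm (u 0%N - l) + 1 by rewrite ltr_wpDl ?vnorm_ge0.
have [N cN] := exists_exprn_lt c_ge0 c_lt1 (divr_gt0 e_gt0 d_gt0).
exists N => m Nm; apply: le_lt_trans (geo m) _.
rewrite ltr_pdivlMr // in cN; apply: le_lt_trans cN.
apply: ler_pM; rewrite ?exprn_ge0 ?vnorm_ge0 ?lerDl //.
exact: ler_wiXn2l c_ge0 (ltW c_lt1) _ _ Nm.
Qed.

End Convergence.

Section RestrictionToLine.
Variables (C : comNzRingType) (n : nat) (y d : 'I_n -> C).
Implicit Types (p q : {mpoly C[n]}).

Definition mline p : {poly C} :=
  mmap (@polyC C) (fun j => (y j)%:P + (d j)%:P * 'X) p.

Lemma horner_mline p t : (mline p).[t] = p.@[fun j => y j + d j * t].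
Proof.
elim/mpolyind: p => [|c m p _ _ IHp].
  by rewrite /mline mmap0 horner0 meval0.
rewrite /mline mmapD hornerD -/(mline p) IHp mevalD; congr (_ + _).
rewrite mmapZ mmapX hornerM hornerC mevalZ mevalX /mmap1 horner_prod.
congr (_ * _); apply: eq_bigr => j _.
by rewrite horner_exp hornerD hornerM hornerX !hornerC.
Qed.

Let chain_rule p := deriv (mline p) = \sum_j mline (p^`M(j)) * (d j)%:P.

Lemma chain_ruleD p q : chain_rule p -> chain_rule q -> chain_rule (p + q).
Proof.
rewrite /chain_rule /mline => dp dq; rewrite mmapD derivD dp dq -big_split /=.
by apply: eq_bigr => j _; rewrite mderivD mmapD mulrDl.
Qed.

Lemma chain_ruleM p q : chain_rule p -> chain_rule q -> chain_rule (p * q).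
Proof.
rewrite /chain_rule => dp dq.
rewrite /mline rmorphM derivM -!/(mline _) dp dq mulr_suml mulr_sumr -big_split /=.
by apply: eq_bigr => j _; rewrite mderivM /mline mmapD !rmorphM; ring.
Qed.

Lemma chain_ruleC c : chain_rule c%:MP.
Proof.
rewrite /chain_rule /mline mmapC derivC big1 // => j _.
by rewrite mderivC mmap0 mul0r.
Qed.

Lemma chain_ruleX i : chain_rule 'X_i.
Proof.
rewrite /chain_rule /mline mmapX mmap1U derivD derivC add0r mul_polyC.
rewrite derivZ derivX.
rewrite (bigD1 i) //= big1 ?addr0 => [|j /negbTE ji].
  rewrite mderivX mnm1E eqxx (_ : (U_(i) - U_(i))%MM = 0%MM).
    by rewrite mpolyX0 scale1r -mpolyC1 mmapC mul1r alg_polyC.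
  by apply/mnmP => k; rewrite mnmBE subnn mnm0E.
by rewrite mderivX mnm1E eq_sym ji scale0r mmap0 mul0r.
Qed.

Lemma deriv_mline p : deriv (mline p) = \sum_j mline (p^`M(j)) * (d j)%:P.
Proof.
elim/mpolyind: p => [|c m p _ _ IHp]; first by rewrite -mpolyC0; apply: chain_ruleC.
apply: chain_ruleD IHp; rewrite -mul_mpolyC.
apply: chain_ruleM; first exact: chain_ruleC.
rewrite mpolyXE_id; apply: (big_ind chain_rule) => [||j _].
- by rewrite -mpolyC1; apply: chain_ruleC.
- exact: chain_ruleM.
elim: (m j) => [|k IHk]; first by rewrite expr0 -mpolyC1; apply: chain_ruleC.
by rewrite exprS; apply: chain_ruleM; [apply: chain_ruleX | apply: IHk].
Qed.

End RestrictionToLine.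

Section Primitive.
Variable K : numFieldType.
Implicit Types p : {poly K}.

Definition prim p : {poly K} :=
  \poly_(k < (size p).+1) (if k is k'.+1 then p`_k' / k'.+1%:R else 0).

Lemma coef_prim p k : (prim p)`_k = if k is k'.+1 then p`_k' / k'.+1%:R else 0.
Proof.
rewrite coef_poly; case: k => [|k] //=; case: ltnP => // size_le.
by rewrite nth_default ?mul0r.
Qed.

Lemma prim_is_linear : linear prim.
Proof.
move=> a p q; apply/polyP => k; rewrite coefD coefZ !coef_prim.
by case: k => [|k]; rewrite ?mulr0 ?addr0 // coefD coefZ mulrDl mulrA.
Qed.

HB.instance Definition _ :=
  GRing.isLinear.Build K {poly K} {poly K} _ prim prim_is_linear.

Lemma deriv_prim p : deriv (prim p) = p.
Proof.
apply/polyP => k; rewrite coef_deriv coef_prim -[_ *+ k.+1]mulr_natr divfK //.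
by rewrite pnatr_eq0.
Qed.

Lemma prim_deriv p : prim (deriv p) = p - (p`_0)%:P.
Proof.
apply/polyP => k; rewrite coef_prim coefB coefC; case: k => [|k] /=.
  by rewrite subrr.
by rewrite coef_deriv subr0 -[_ *+ k.+1]mulr_natr mulfK // pnatr_eq0.
Qed.

Lemma horner0_prim p : (prim p).[0] = 0.
Proof. by rewrite horner_coef0 coef_prim. Qed.

End Primitive.

Section RealPart.
Variable R : realType.
Local Notation Re := (@complex.Re R : Rcomplex R -> R).
Implicit Types p : {poly R[i]}.

Definition Re_poly p : {poly R} := \poly_(k < size p) complex.Re p`_k.

Lemma coef_Re_poly p k : (Re_poly p)`_k = complex.Re p`_k.
Proof. by rewrite coef_poly; case: ltnP => // size_le; rewrite nth_default. Qed.

Lemma deriv_Re_poly p : deriv (Re_poly p) = Re_poly (deriv p).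
Proof.
by apply/polyP => k; rewrite coef_deriv !coef_Re_poly coef_deriv (raddfMn Re).
Qed.

Lemma horner_Re_poly p (t : R) : (Re_poly p).[t] = complex.Re p.[t%:C].
Proof.
rewrite (horner_coef_wide _ (size_poly _ _)) horner_coef (raddf_sum Re).
apply: eq_bigr => k _; rewrite coef_Re_poly -rmorphXn.
by case: p`_k => a b; rewrite /= mulr0 subr0.
Qed.

Lemma Re_prim_between (G : {poly R[i]}) lo hi :
  (forall c : R, 0 < c < 1 -> lo <= complex.Re G.[c%:C] <= hi) ->
  lo <= complex.Re (prim G).[1] <= hi.
Proof.
move=> G_between; have [c c01 mvt] := poly_mvt (Re_poly (prim G)) (@ltr01 R).
move: mvt; rewrite deriv_Re_poly deriv_prim !horner_Re_poly rmorph0 rmorph1.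
rewrite horner0_prim (raddf0 Re) !subr0 mulr1 => ->.
by apply: G_between; rewrite in_itv /= in c01.
Qed.

Lemma inIC_prim (J : IC R) (G : {poly R[i]}) :
  (forall c : R, 0 < c < 1 -> inIC J G.[c%:C]) -> inIC J (prim G).[1].
Proof.
move=> G_in; apply/andP; split.
  by apply: Re_prim_between => c /G_in /andP[].
have := @Re_prim_between ('i *: G) (- ihi (icim J)) (- ilo (icim J)).
rewrite linearZ hornerZ mulrC ReiNIm !lerN2 andbC; apply => c /G_in /andP[_].
by rewrite hornerZ mulrC ReiNIm !lerN2 andbC.
Qed.

End RealPart.

Section MeanValue.
Variables (R : realType) (n : nat).

Lemma inIR_segment (X : IR R) a b c : inIR X a -> inIR X b -> 0 <= c <= 1 ->
  inIR X (b + (a - b) * c).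
Proof. by case/andP=> ? ? /andP[? ?] /andP[? ?]; apply/andP; split; nra. Qed.

Lemma inICv_segment (I : ICvec R n) (x y : 'cV[R[i]]_n) (c : R) :
  inICv I x -> inICv I y -> 0 <= c <= 1 ->
  inICv I (\col_k (y k ord0 + (x k ord0 - y k ord0) * c%:C)).
Proof.
move=> x_in y_in c01 k; rewrite mxE.
have /andP[x_re x_im] := x_in k; have /andP[y_re y_im] := y_in k.
case: (x k ord0) (y k ord0) x_re x_im y_re y_im => [? ?] [? ?] /= *.
by apply/andP; split; rewrite /= ?mulr0 ?subr0 ?add0r; apply: inIR_segment.
Qed.

Lemma enclosure_mean_value (F : 'I_n -> {mpoly R[i][n]})
    (boxJF : ICvec R n -> ICmat R n) (I : ICvec R n) (x y : 'cV[R[i]]_n) :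
  is_enclosure_JF F boxJF -> inICv I x -> inICv I y ->
  exists2 M, inICm (boxJF I) M & evalF F x - evalF F y = M *m (x - y).
Proof.
move=> JF_encl x_in y_in.
pose yv j := y j ord0; pose dv j := x j ord0 - y j ord0.
(* M i j = \int_0^1 (d_j F_i)(y + t (x - y)) dt *)
exists (\matrix_(i, j) (prim (mline yv dv ((F i)^`M(j)))).[1]).
  move=> i j; rewrite mxE; apply: inIC_prim => c /andP[c_gt0 c_lt1].
  have c01 : 0 <= c <= 1 by rewrite !ltW.
  have := JF_encl _ _ (inICv_segment x_in y_in c01) i j.
  rewrite /jacF mxE horner_mline.
  rewrite (meval_eq _ (v2 := fun k => yv k + dv k * c%:C)) // => k.
  by rewrite mxE.
apply/matrixP => i k; rewrite (ord1 k) !mxE.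
under eq_bigr do rewrite !mxE.
set H := mline yv dv (F i).
have H1 : H.[1] = (F i).@[fun j => x j ord0].
  by rewrite horner_mline; apply: meval_eq => j; rewrite mulr1 addrC subrK.
have H0 : H.[0] = (F i).@[fun j => y j ord0].
  by rewrite horner_mline; apply: meval_eq => j; rewrite mulr0 addr0.
rewrite -H1 -H0 (_ : H.[1] - H.[0] = (prim (deriv H)).[1]); last first.
  by rewrite prim_deriv hornerD hornerN hornerC horner_coef0.
rewrite deriv_mline linear_sum horner_sum; apply: eq_bigr => j _.
by rewrite mulrC mul_polyC linearZ hornerZ mulrC.
Qed.

End MeanValue.

Section ConstantNewton.
Variables (R : realType) (n : nat) (F : 'I_n -> {mpoly R[i][n]}).
Variables (boxF : ICvec R n -> ICvec R n) (boxJF : ICvec R n -> ICmat R n).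
Hypotheses (F_encl : is_enclosure_F F boxF) (JF_encl : is_enclosure_JF F boxJF).
Variables (I : ICvec R n) (Y : 'M[R[i]]_n).

Local Notation slope_box := (icmsub (ptmx 1%:M) (icmm (ptmx Y) (boxJF I))).
Local Notation step z := (z - Y *m evalF F z).

Lemma inICm_slope_box M : inICm (boxJF I) M -> inICm slope_box (1%:M - Y *m M).
Proof.
by move=> M_in; apply: inICmB (inICm_pt _) (inICm_mulmx (inICm_pt _) M_in).
Qed.

Lemma newton_step_in_krawczyk xt z : inICv I xt -> inICv I z ->
  inICv (krawczyk boxF boxJF xt Y I) (step z).
Proof.
move=> xt_in z_in; have [M M_in FE] := enclosure_mean_value JF_encl z_in xt_in.
have -> : step z = xt - Y *m evalF F xt + (1%:M - Y *m M) *m (z - xt).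
  rewrite mulmxBl mul1mx -mulmxA -FE mulmxBr.
  by rewrite opprB addrACA [xt + _]addrC subrK addKr.
apply: inICvD.
  exact: inICvB (inICv_pt _) (inICv_mulmx (inICm_pt _) (F_encl (inICv_pt _))).
exact: inICv_mulmx (inICm_slope_box M_in) (inICvB z_in (inICv_pt _)).
Qed.

Lemma newton_const_iter_in xt x : inICv I xt ->
  icv_subset (krawczyk boxF boxJF xt Y I) I -> inICv I x ->
  forall m, inICv I (newton_const_iter F Y x m).
Proof.
move=> xt_in K_sub x_in; elim=> [//|m IHm].
exact: K_sub (newton_step_in_krawczyk xt_in IHm).
Qed.

Lemma newton_step_contract xstar z : inICv I xstar -> evalF F xstar = 0 ->
  inICv I z -> vnorm (step z - xstar) <= imnorm slope_box * vnorm (z - xstar).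
Proof.
move=> xstar_in F0 z_in.
have [M M_in FE] := enclosure_mean_value JF_encl z_in xstar_in.
rewrite F0 subr0 in FE.
have -> : step z - xstar = (1%:M - Y *m M) *m (z - xstar).
  by rewrite FE mulmxBl mul1mx mulmxA addrAC.
exact: vnorm_mulmx_le_imnorm (inICm_slope_box M_in).
Qed.

End ConstantNewton.

Theorem proposition4p9 (R : realType) (n : nat)
    (F : 'I_n -> {mpoly R[i][n]})
    (boxF : ICvec R n -> ICvec R n) (boxJF : ICvec R n -> ICmat R n)
    (hF : is_enclosure_F F boxF) (hJF : is_enclosure_JF F boxJF)
    (I : ICvec R n) (xt : 'cV[R[i]]_n) (Y : 'M[R[i]]_n)
    (hI : strong_iaz_witness boxF boxJF I xt Y)
    (xstar : 'cV[R[i]]_n) (hxstar_in : inICv I xstar) (hxstar0 : evalF F xstar = 0)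
    (x : 'cV[R[i]]_n) (hx : inICv I x) :
  converges_to (newton_const_iter F Y x) xstar /\
  converges_linearly (newton_const_iter F Y x) xstar.
Proof.
(* Invertibility of Y only matters for the uniqueness of the zero in I. *)
case: hI => xt_in _ K_sub sqrt2_contr.
have contr_lt1 : imnorm (icmsub (ptmx 1%:M) (icmm (ptmx Y) (boxJF I))) < 1.
  have sqrt2_gt1 : 1 < Num.sqrt (2 : R) by rewrite -{1}sqrtr1 ltr_sqrt // ltr1n.
  move: sqrt2_contr; set c := imnorm _ => sqrt2_contr.
  by have [c_le0|c_gt0] := lerP c 0; [apply: le_lt_trans c_le0 ltr01 | nra].
have iter_in := newton_const_iter_in hF hJF xt_in K_sub hx.
have lin : converges_linearly (newton_const_iter F Y x) xstar.
  apply: converges_linearly_contraction contr_lt1 _ => m.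
  exact (newton_step_contract hJF Y hxstar_in hxstar0 (iter_in m)).
by split; first exact: converges_linearly_to.
Qed.
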